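(* Let $N\geq 1$, $h=1/N$, and fix a simplicial complex (graph) $K$. Consider the discrete $N$-layer TOGL network with node updates $x_v^{\ell}=x_v^{\ell-1}+\frac1N\big(\psi(\mathrm{PD}(\sigma;f_\theta,x^{\ell-1},K))+m_v^{\ell-1}\big)$, and its continuous counterpart $\dot x_v^{t}=\psi(\mathrm{PD}(\sigma;f_\theta,x^{t},K))+m_v^{t}$, both started from the same initial features. Suppose the message map $m$ is $L_m$-Lipschitz and the map $x\mapsto\psi(\mathrm{PD}(\sigma;f_\theta,x,K))$ is $L_\beta$-Lipschitz. Then the discretization error $e_v(\ell)=x_v^{\ell/N}-x_v^{\ell}$ for node $v$ at layer $\ell$ satisfies $$\|e_v(\ell)\|_1\leq R_1(h)\,\frac{N\big(\exp(L_m+L_\beta)-1\big)}{L_m+L_\beta},$$ where $R_1(h)$ is the (bound on the) remainder term of the first-order Taylor expansion $x_v^{s+h}=x_v^{s}+h\dot x_v^{s}+R_1(h)$ of the continuous TOGL trajectory.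
   Context: Here $x^t=\{x_u^t\}_u$ denotes all node embeddings; $m_v$ is the aggregated message to node $v$ computed by a message-passing layer (same parametrization in the discrete and continuous models, differing only in inputs); $\mathrm{PD}(\sigma;f_\theta,x,K)$ denotes the persistence diagram (with entries associated to node $v$) computed from the vertex-color filtration of $K$ induced by the filtering function $f_\theta$ applied to the node features $x$ (each simplex entering at the maximum of $f_\theta$ over its vertices), and $\psi$ is a vectorization map (e.g. an MLP/DeepSet) sending the diagram to a vector attached to node $v$; $L_\beta=L_\psi L_\theta$. The continuous trajectory at time $\ell/N$ is compared with the output of discrete layer $\ell$. *)

From HB Require Import structures.
From mathcomp Require Import all_boot all_order all_algebra.
From mathcomp Require Import all_classical all_reals all_analysis.
Set Implicit Arguments. Unset Strict Implicit. Unset Printing Implicit Defensive.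
Import Order.TTheory GRing.Theory Num.Theory.
Import numFieldNormedType.Exports.
Local Open Scope ring_scope.

(* Node embeddings of a graph with n nodes and feature dimension d:
   row v of X : 'M[R]_(n, d) is the embedding x_v of node v. *)

Definition node_l1 (R : realType) (n d : nat) (X : 'M[R]_(n, d)) (v : 'I_n) : R :=
  \sum_(i < d) `|X v i|.

Definition emb_norm (R : realType) (n d : nat) (X : 'M[R]_(n, d)) : R :=
  \big[Num.max/0]_(v < n) node_l1 X v.

Definition lipschitz_emb (R : realType) (n d : nat)
    (f : 'M[R]_(n, d) -> 'M[R]_(n, d)) (L : R) : Prop :=
  forall (X Y : 'M[R]_(n, d)) (v : 'I_n),
    node_l1 (f X - f Y) v <= L * emb_norm (X - Y).

(* Discrete N-layer TOGL network:
   x^l = x^{l-1} + (1/N) (beta(x^{l-1}) + m(x^{l-1})),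
   where beta x = psi(PD(sigma; f_theta, x, K)) (row v = vector attached to v)
   and m x is the aggregated message (row v = m_v). *)
Fixpoint togl_discrete (R : realType) (n d : nat)
    (beta m : 'M[R]_(n, d) -> 'M[R]_(n, d)) (N : nat) (x0 : 'M[R]_(n, d))
    (l : nat) : 'M[R]_(n, d) :=
  match l with
  | 0 => x0
  | l'.+1 =>
      let x := togl_discrete beta m N x0 l' in
      x + (N%:R)^-1 *: (beta x + m x)
  end.

(** The error e_l of Euler's scheme for x' = beta x + m x obeys the one-step
    bound |e_(l+1)| <= R1 + (1 + L/N) |e_l|: the Taylor remainder of the exact
    trajectory plus the propagation of the previous error through the
    (L = Lm + Lb)-Lipschitz vector field over a step of length 1/N.
    Unrolling gives |e_l| <= R1 (1 + (1 + L/N) + ... + (1 + L/N)^(l-1))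
    = R1 N ((1 + L/N)^l - 1) / L, and (1 + L/N)^l <= exp L for l <= N. *)
From HB Require Import structures.
From mathcomp Require Import all_boot all_order all_algebra.
From mathcomp Require Import all_classical all_reals all_analysis.
From mathcomp Require Import ring.
Import Order.TTheory GRing.Theory Num.Theory.
Import numFieldNormedType.Exports.
Local Open Scope ring_scope.
Local Open Scope classical_set_scope.

Section NodeNorm.
Context {R : realType} {n d : nat}.
Implicit Types (A B : 'M[R]_(n, d)) (v : 'I_n).

Lemma node_l1_ge0 A v : 0 <= node_l1 A v.
Proof. by apply: sumr_ge0 => i _. Qed.

Lemma node_l10 v : node_l1 (0 : 'M[R]_(n, d)) v = 0.
Proof. by rewrite /node_l1 big1 // => i _; rewrite mxE normr0. Qed.

Lemma node_l1D A B v : node_l1 (A + B) v <= node_l1 A v + node_l1 B v.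
Proof.
rewrite /node_l1 -big_split /=; apply: ler_sum => i _; rewrite mxE; exact: ler_normD.
Qed.

Lemma node_l1Z (c : R) A v : node_l1 (c *: A) v = `|c| * node_l1 A v.
Proof. by rewrite /node_l1 mulr_sumr; apply: eq_bigr => i _; rewrite mxE normrM. Qed.

Lemma node_l1_le_emb_norm A v : node_l1 A v <= emb_norm A.
Proof. exact: le_bigmax. Qed.

Lemma emb_norm_le A (b : R) : 0 <= b -> (forall v, node_l1 A v <= b) -> emb_norm A <= b.
Proof. by move=> b0 Ab; apply: bigmax_le. Qed.

Lemma emb_norm_ge0 A : 0 <= emb_norm A.
Proof. exact: bigmax_ge_id. Qed.

Lemma emb_norm0 : emb_norm (0 : 'M[R]_(n, d)) = 0.
Proof.
by apply/le_anti; rewrite emb_norm_ge0 emb_norm_le // => v; rewrite node_l10.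
Qed.

Lemma lipschitz_embD {f g : 'M[R]_(n, d) -> 'M[R]_(n, d)} {Lf Lg : R} :
  lipschitz_emb f Lf -> lipschitz_emb g Lg ->
  lipschitz_emb (fun X => f X + g X) (Lf + Lg).
Proof.
move=> Hf Hg X Y v; rewrite opprD addrACA mulrDl.
exact: le_trans (node_l1D _ _ _) (lerD (Hf X Y v) (Hg X Y v)).
Qed.

(** [y'] plays the exact solution one step after [y], [x] the numerical one. *)
Lemma euler_step_error {F : 'M[R]_(n, d) -> 'M[R]_(n, d)} {L h : R} y y' x v :
  lipschitz_emb F L -> 0 <= h ->
  node_l1 (y' - (x + h *: F x)) v
    <= node_l1 (y' - y - h *: F y) v + (1 + h * L) * emb_norm (y - x).
Proof.
move=> HF h0.
have -> : y' - (x + h *: F x) = (y' - y - h *: F y) + ((y - x) + h *: (F y - F x)).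
  by apply/matrixP => i j; rewrite !mxE; ring.
apply: le_trans (node_l1D _ _ _) _; rewrite lerD2l.
apply: le_trans (node_l1D _ _ _) _; rewrite node_l1Z ger0_norm // mulrDl mul1r -mulrA.
exact: lerD (node_l1_le_emb_norm _ _) (ler_wpM2l h0 (HF y x v)).
Qed.

End NodeNorm.

Lemma discrete_gronwall {R : numDomainType} (a : nat -> R) {c q : R} {k : nat} :
  0 <= q -> a 0 <= 0 -> (forall l, (l < k)%N -> a l.+1 <= c + q * a l) ->
  forall l, (l <= k)%N -> a l <= c * \sum_(i < l) q ^+ i.
Proof.
move=> q0 a0 step; elim=> [|l IH] lk; first by rewrite big_ord0 mulr0.
apply: le_trans (step l lk) _.
rewrite big_ord_recl expr0 mulrDr mulr1 lerD2l.
under eq_bigr do rewrite exprS.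
rewrite -mulr_sumr mulrCA; apply: (ler_wpM2l q0); exact: IH (ltnW lk).
Qed.

Lemma expr_1Ddiv_le_expR {R : realType} {x : R} {N l : nat} :
  0 <= x -> (0 < N)%N -> (l <= N)%N -> (1 + x / N%:R) ^+ l <= expR x.
Proof.
move=> x0 N0 lN; have N0' : 0 < N%:R :> R by rewrite ltr0n.
have q1 : 1 <= 1 + x / N%:R by rewrite lerDl divr_ge0.
apply: le_trans (ler_weXn2l q1 lN) _.
have -> : expR x = expR (x / N%:R) ^+ N.
  by rewrite -expRM_natl mulrC divfK // gt_eqF.
apply: lerXn2r; rewrite ?nnegrE ?expR_ge0 ?(le_trans ler01 q1) //.
exact: expR_ge1Dx.
Qed.

Lemma sum_expr_1Ddiv_le {R : realType} {x : R} {N l : nat} :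
  0 < x -> (0 < N)%N -> (l <= N)%N ->
  \sum_(i < l) (1 + x / N%:R) ^+ i <= N%:R * (expR x - 1) / x.
Proof.
move=> x0 N0 lN; have N0' : 0 < N%:R :> R by rewrite ltr0n.
have geometric : (\sum_(i < l) (1 + x / N%:R) ^+ i) * x
    = N%:R * ((1 + x / N%:R) ^+ l - 1).
  by rewrite subrX1; field; rewrite gt_eqF.
rewrite ler_pdivlMr // geometric ler_wpM2l ?ler0n // lerB //.
exact: expr_1Ddiv_le_expR (ltW x0) N0 lN.
Qed.

Theorem proposition3 (R : realType) (n d : nat) (N : nat) (hN : (1 <= N)%N)
    (beta m : 'M[R]_(n, d) -> 'M[R]_(n, d))
    (Lm Lb : R) (hLm : 0 <= Lm) (hLb : 0 <= Lb) (hL : 0 < Lm + Lb)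
    (Hm : lipschitz_emb m Lm) (Hb : lipschitz_emb beta Lb)
    (x0 : 'M[R]_(n, d)) (xc : R -> 'M[R]_(n, d))
    (Hinit : xc 0 = x0)
    (Hode : forall t : R, 0 <= t <= 1 ->
       is_derive t (1 : R) xc (beta (xc t) + m (xc t)))
    (R1 : R)
    (Htaylor : forall s : R, 0 <= s -> s + (N%:R)^-1 <= 1 ->
       forall v : 'I_n,
         node_l1 (xc (s + (N%:R)^-1) - xc s - (N%:R)^-1 *: 'D_1 xc s) v <= R1) :
  forall (l : nat), (l <= N)%N -> forall v : 'I_n,
    node_l1 (xc (l%:R / N%:R) - togl_discrete beta m N x0 l) v
      <= R1 * (N%:R * (expR (Lm + Lb) - 1) / (Lm + Lb)).
Proof.
move=> l lN v.
have N0 : 0 < N%:R :> R by rewrite ltr0n.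
have h0 : 0 <= (N%:R : R)^-1 by rewrite invr_ge0 ltW.
have R10 : 0 <= R1.
  apply: le_trans (node_l1_ge0 _ v) (Htaylor 0 (lexx _) _ v).
  by rewrite add0r invf_le1 ?ler1n.
have time_ok k : (k <= N)%N -> 0 <= (k%:R / N%:R : R) <= 1.
  by move=> kN; rewrite divr_ge0 ?ler0n ?(ltW N0) //= ler_pdivrMr // mul1r ler_nat.
have q0 : 0 <= 1 + (Lm + Lb) / N%:R by rewrite addr_ge0 // divr_ge0 // ltW.
pose err k := xc (k%:R / N%:R) - togl_discrete beta m N x0 k.
have HF : lipschitz_emb (fun X => beta X + m X) (Lm + Lb).
  by rewrite addrC; apply: lipschitz_embD.
have err_step k : (k < N)%N ->
    emb_norm (err k.+1) <= R1 + (1 + (Lm + Lb) / N%:R) * emb_norm (err k).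
  move=> kN; apply: emb_norm_le => [|w].
    by rewrite addr_ge0 // mulr_ge0 ?emb_norm_ge0.
  have tk : k.+1%:R / N%:R = k%:R / N%:R + N%:R^-1 :> R.
    by rewrite -addn1 natrD mulrDl mul1r.
  have [/andP[s0 _] /andP[_ sh1]] := (time_ok k (ltnW kN), time_ok k.+1 kN).
  rewrite tk in sh1; rewrite /err tk [(Lm + Lb) / _]mulrC.
  apply: le_trans (euler_step_error (xc (k%:R / N%:R)) _ _ w HF h0) _.
  rewrite lerD2r.
  by case: (Hode _ (time_ok k (ltnW kN))) => _ <-; apply: Htaylor.
apply: le_trans (node_l1_le_emb_norm _ v) _.
apply: le_trans _ (ler_wpM2l R10 (sum_expr_1Ddiv_le hL hN lN)).
apply: (discrete_gronwall (fun k => emb_norm (err k)) q0 _ err_step _ lN).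
by rewrite /err mul0r Hinit subrr emb_norm0.
Qed.
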